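(* Let $F\colon[0,+\infty)\to[0,+\infty)$ be a continuous metric preserving function, let $X$ be an mm-space and $X^F:=(X,F\circ d_X,m_X)$. Then (1) $\sup_{\varepsilon>0}\alpha_{X^F}(2F(s)+\varepsilon)\le\alpha_X(s)$ for every $s>0$; (2) $\mathrm{OD}(X^F;-2\kappa)\le 4F(\mathrm{OD}(X;-\kappa))$ for every $\kappa>0$.
   Context: An mm-space is a triple $(X,d_X,m_X)$ with $(X,d_X)$ complete separable metric space and $m_X$ a Borel probability measure. $F\colon[0,+\infty)\to[0,+\infty)$ is metric preserving if $F\circ d$ is a metric for every metric $d$. For $A\subset X$, $r>0$: $U_r(A)=\{x: d_X(x,A)<r\}$. Concentration function: $\alpha_X(r):=\sup\{1-m_X(U_r(A)) : A\subset X \text{ Borel}, m_X(A)\ge 1/2\}$ (for $X^F$ neighborhoods are taken w.r.t. $F\circ d_X$). Partial diameter: for $\alpha\le 1$, $\mathrm{PD}(X;\alpha)$ is the infimum of $\operatorname{diam}A$ over Borel $A\subset X$ with $m_X(A)\ge\alpha$. Observable diameter: $\mathrm{OD}(X;-\kappa):=\sup_{f}\mathrm{PD}((\mathbb R,|\cdot|,f_*m_X);1-\kappa)$, the sup over all 1-Lipschitz $f\colon X\to\mathbb R$. *)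

From HB Require Import structures.
From mathcomp Require Import all_boot all_order all_algebra.
From mathcomp Require Import all_classical all_reals all_analysis.
Set Implicit Arguments. Unset Strict Implicit. Unset Printing Implicit Defensive.
Import Order.TTheory GRing.Theory Num.Theory.
Import numFieldNormedType.Exports.
Local Open Scope classical_set_scope.
Local Open Scope ring_scope.

Section Defs.
Variable R : realType.

Definition is_metric (T : Type) (d : T -> T -> R) : Prop :=
  (forall x y, 0 <= d x y) /\
  (forall x y, d x y = 0 <-> x = y) /\
  (forall x y, d x y = d y x) /\
  (forall x y z, d x z <= d x y + d y z).

(* F : [0,+oo) -> [0,+oo): nonnegative on [0,+oo) (values elsewhere irrelevant) *)
Definition nonneg_on_nonneg (F : R -> R) : Prop := forall x, 0 <= x -> 0 <= F x.

Definition metric_preserving (F : R -> R) : Prop :=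
  forall (T : Type) (d : T -> T -> R), is_metric d -> is_metric (fun x y => F (d x y)).

Definition d_open (T : Type) (d : T -> T -> R) (A : set T) : Prop :=
  forall x, A x -> exists2 r : R, 0 < r & forall y, d x y < r -> A y.

Definition d_complete (T : Type) (d : T -> T -> R) : Prop :=
  forall u : nat -> T,
    (forall e : R, 0 < e -> exists N, forall n m, (N <= n)%N -> (N <= m)%N -> d (u n) (u m) < e) ->
    exists x, forall e : R, 0 < e -> exists N, forall n, (N <= n)%N -> d (u n) x < e.

Definition d_separable (T : Type) (d : T -> T -> R) : Prop :=
  exists S : set T, countable S /\
    forall x (e : R), 0 < e -> exists s, S s /\ d x s < e.

(* (T, d, m) is an mm-space: d complete separable metric, and the measurable
   sets of T are exactly the Borel sets of the d-topology; m is a Borel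
   probability measure (the probability structure on T). *)
Definition mm_space (dsp : measure_display) (T : measurableType dsp)
    (d : T -> T -> R) : Prop :=
  [/\ is_metric d, d_complete d, d_separable d &
      @measurable dsp T = <<s d_open d >>].

(* U_r(A) = {x | d(x,A) < r}, with d(x,A) = inf_{a in A} d x a *)
Definition nbhd (T : Type) (d : T -> T -> R) (r : R) (A : set T) : set T :=
  [set x | exists2 a, A a & d x a < r].

Local Open Scope ereal_scope.

Definition conc (dsp : measure_display) (T : measurableType dsp)
    (d : T -> T -> R) (m : set T -> \bar R) (r : R) : \bar R :=
  ereal_sup [set 1 - m (nbhd d r A) |
             A in [set A : set T | measurable A /\ (1 / 2)%:E <= m A]].

(* diameter, with diam(empty) = 0 *)
Definition diam (T : Type) (d : T -> T -> R) (A : set T) : \bar R :=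
  ereal_sup ([set 0] `|` [set (d p.1 p.2)%:E | p in A `*` A]).

Definition partial_diam (dsp : measure_display) (T : measurableType dsp)
    (d : T -> T -> R) (m : set T -> \bar R) (a : R) : \bar R :=
  ereal_inf [set diam d A | A in [set A : set T | measurable A /\ a%:E <= m A]].

Definition lipschitz1 (T : Type) (d : T -> T -> R) (f : T -> R) : Prop :=
  forall x y, (`|f x - f y| <= d x y)%R.

Definition obs_diam (dsp : measure_display) (T : measurableType dsp)
    (d : T -> T -> R) (m : set T -> \bar R) (kappa : R) : \bar R :=
  ereal_sup [set partial_diam (fun x y : R => `|x - y|)%R (pushforward m f) (1 - kappa)%R |
             f in [set f : T -> R | lipschitz1 d f]].

End Defs.

From HB Require Import structures.
From mathcomp Require Import all_boot all_order all_algebra.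
From mathcomp Require Import all_classical all_reals all_analysis.
From mathcomp Require Import ring lra.
Set Implicit Arguments. Unset Strict Implicit. Unset Printing Implicit Defensive.
Import Order.TTheory GRing.Theory Num.Theory.
Import numFieldNormedType.Exports.
Local Open Scope classical_set_scope.
Local Open Scope ring_scope.

(* A metric preserving [F] vanishes at [0], is nonnegative, and satisfies
   [F a <= F b + F c] whenever [a, b, c] are the sides of a triangle; being
   continuous at [0], it makes every [F \o d]-open set [d]-open, so
   (F o d)-Lipschitz functions are Borel measurable.
   (1) If [d x a < s] then [d x a <= 2 s], hence [F (d x a) <= 2 F s]: the
   [s]-neighbourhood for [d] lies in the [(2 F s + e)]-neighbourhood for
   [F \o d].
   (2) Let [OD(X; -k) <= D]. Applying the definition of [OD] to the distance
   function to a set of measure [> k] shows that its [(D + r)]-neighbourhood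
   has measure [>= 1 - k]. For an (F o d)-Lipschitz [g] and a [k]-quantile [M]
   of [g], the sets [{g <= M + e}] and [{g > M - e}] have measure [> k] when
   [k < 1/2], so their neighbourhoods meet in a set of measure [>= 1 - 2k], on
   which [g] lies in an interval of length [4 F D + 4 e], because
   [F t <= 2 F D + e] for [t < D + r]. *)

Section MetricPreserving.
Variables (R : realType) (F : R -> R).
Hypothesis mpF : metric_preserving F.

Lemma metric_preserving0 : F 0 = 0.
Proof.
have d0 : is_metric (fun _ _ : unit => 0 : R).
  by split; [|split; [case=> [] []|split]] => *; rewrite ?addr0.
by have [_ [/(_ tt tt) [_ ->]]] := mpF d0.
Qed.

Lemma metric_preserving_ge0 x : 0 <= x -> 0 <= F x.
Proof.
rewrite le0r => /predU1P [->|x0]; first by rewrite metric_preserving0.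
pose d (b b' : bool) := if b == b' then 0 else x.
have dm : is_metric d.
  rewrite /d; split; first by move=> [] [] /=; lra.
  split; first by move=> [] [] /=; split=> // /eqP; rewrite gt_eqF.
  by split=> [[] []|[] [] []] /=; lra.
by have [/(_ true false)] := mpF dm.
Qed.

(* [F \o d] is a metric on the three-point space with side lengths [a, b, c];
   degenerate triangles are handled by [F 0 = 0] and [0 <= F]. *)
Lemma metric_preserving_triangle a b c : 0 <= a -> 0 <= b -> 0 <= c ->
  a <= b + c -> b <= a + c -> c <= a + b -> F a <= F b + F c.
Proof.
move=> a0 b0 c0 abc bac cab.
have Fb0 := metric_preserving_ge0 b0; have Fc0 := metric_preserving_ge0 c0.
have [->|an0] := eqVneq a 0; first by rewrite metric_preserving0 addr_ge0.
have [b_0|bn0] := eqVneq b 0.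
  have -> : a = c by lra.
  by rewrite b_0 metric_preserving0 add0r.
have [c_0|cn0] := eqVneq c 0.
  have -> : a = b by lra.
  by rewrite c_0 metric_preserving0 addr0.
pose d (p q : option bool) : R := match p, q with
  | None, Some true | Some true, None => b
  | Some true, Some false | Some false, Some true => c
  | None, Some false | Some false, None => a
  | _, _ => 0 end.
have dm : is_metric d.
  rewrite /d; split; first by move=> [[]|] [[]|] /=; lra.
  split; first by move=> [[]|] [[]|] /=; split=> // /eqP;
    rewrite ?(negPf an0, negPf bn0, negPf cn0).
  by split=> [[[]|] [[]|]|[[]|] [[]|] [[]|]] //=; lra.
by have [_ [_ [_ /(_ None (Some true) (Some false))]]] := mpF dm.
Qed.

Lemma metric_preserving_le_double a b : 0 <= a -> a <= 2 * b -> F a <= 2 * F b.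
Proof.
move=> a0 ab; rewrite mulr2n mulrDl mul1r.
by apply: metric_preserving_triangle; lra.
Qed.

Lemma metric_preserving_subadditive a b : 0 <= a -> 0 <= b ->
  F (a + b) <= F a + F b.
Proof. by move=> a0 b0; apply: metric_preserving_triangle; lra. Qed.

Hypothesis F_cont : {within `[0, +oo[, continuous F}.

Lemma metric_preserving_small e : 0 < e ->
  exists2 r : R, 0 < r & forall u, 0 <= u -> u < r -> F u < e.
Proof.
move: F_cont => /continuous_within_itvcyP [_ /cvgrPdist_lt Fe] e0.
have := Fe e e0; rewrite /at_right near_withinE /= => -[r /= r0 Fr].
exists r => // u u0 ur; have [->|un0] := eqVneq u 0.
  by rewrite metric_preserving0.
have /Fr : ball_ Num.norm 0 r u by rewrite /ball_ /= sub0r normrN ger0_norm.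
rewrite metric_preserving0 sub0r normrN lt_neqAle eq_sym un0 u0 => /(_ isT).
exact/le_lt_trans/ler_norm.
Qed.

Lemma metric_preserving_le_double_add D e : 0 <= D -> 0 < e ->
  exists2 r : R, 0 < r & forall t, 0 <= t -> t < D + r -> F t <= 2 * F D + e.
Proof.
move=> D0 e0; have [r r0 Fr] := metric_preserving_small e0.
exists r => // t t0 tDr; have FD0 := metric_preserving_ge0 D0.
have [t2D|t2D] := leP t (2 * D).
  by have := metric_preserving_le_double t0 t2D; lra.
have tD0 : 0 <= t - D by lra.
have FtD : F (t - D) < e by apply: Fr; lra.
by have := metric_preserving_subadditive D0 tD0; rewrite addrC subrK; lra.
Qed.

Lemma d_open_metric_preserving (T : Type) (d : T -> T -> R) (A : set T) :
  is_metric d -> d_open (fun x y => F (d x y)) A -> d_open d A.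
Proof.
move=> [d0 _] oA x /oA [r r0 rA]; have [s s0 Fs] := metric_preserving_small r0.
by exists s => // y /(Fs _ (d0 x y)) /rA.
Qed.

End MetricPreserving.

Section MetricSpace.
Variables (R : realType) (T : Type) (d : T -> T -> R).
Hypothesis dm : is_metric d.

Lemma nbhd_open r A : d_open d (nbhd d r A).
Proof.
have [_ [_ [dC dT]]] := dm; move=> x [a Aa xa].
exists (r - d x a) => [|y xy]; first by rewrite subr_gt0.
by exists a => //; have := dT y x a; rewrite (dC y x); lra.
Qed.

Lemma lipschitz1_open_preimage (h : T -> R) a :
  lipschitz1 d h -> d_open d (h @^-1` `]a, +oo[).
Proof.
move=> hl x /=; rewrite in_itv /= andbT => ax.
exists (h x - a) => [|y xy]; first by rewrite subr_gt0.
rewrite /= in_itv /= andbT.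
by have := le_lt_trans (hl x y) xy; rewrite ltr_norml => /andP[]; lra.
Qed.

Definition dist_set (A : set T) (x : T) : R := inf [set d x a | a in A].

Variable A : set T.
Hypothesis A0 : A !=set0.

Lemma dist_set_le x a : A a -> dist_set A x <= d x a.
Proof.
move=> Aa; apply: ge_inf; last by exists a.
by exists 0 => _ [b _ <-]; case: dm.
Qed.

Lemma dist_set_ge0 x : 0 <= dist_set A x.
Proof.
have [a Aa] := A0; apply: lb_le_inf; first by exists (d x a), a.
by move=> _ [b _ <-]; case: dm.
Qed.

Lemma dist_set_in a : A a -> dist_set A a = 0.
Proof.
move=> Aa; apply/eqP; rewrite eq_le dist_set_ge0 andbT.
have [_ [daa _]] := dm; rewrite -((daa a a).2 erefl); exact: dist_set_le.
Qed.

Lemma dist_set_lt x r : dist_set A x < r -> nbhd d r A x.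
Proof.
have [a0 Aa0] := A0; case/inf_lt; first by exists (d x a0), a0.
by move=> _ [a Aa <-] xa; exists a.
Qed.

Lemma dist_set_lipschitz : lipschitz1 d (dist_set A).
Proof.
have [_ [_ [dC dT]]] := dm.
have le x y : dist_set A x - d x y <= dist_set A y.
  have [a0 Aa0] := A0; apply: lb_le_inf; first by exists (d y a0), a0.
  by move=> _ [a Aa <-]; have := dist_set_le x Aa; have := dT x y a; lra.
move=> x y; rewrite ler_norml; have := le y x; have := le x y.
by rewrite (dC y x); lra.
Qed.

End MetricSpace.

Lemma measurable_funT_preimage (d d' : measure_display) (aT : measurableType d)
    (rT : measurableType d') (f : aT -> rT) (B : set rT) :
  measurable_fun setT f -> measurable B -> measurable (f @^-1` B).
Proof. by move=> mf mB; rewrite -[_ @^-1` _]setTI; exact: mf. Qed.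

Section MMSpace.
Variables (R : realType) (dsp : measure_display) (T : measurableType dsp).
Variable d : T -> T -> R.
Hypothesis mmX : mm_space d.

Lemma d_open_measurable A : d_open d A -> measurable A.
Proof. by case: mmX => _ _ _ ->; apply: sub_sigma_algebra. Qed.

Lemma measurable_nbhd r A : measurable (nbhd d r A).
Proof. by apply/d_open_measurable/nbhd_open; case: mmX. Qed.

Lemma d_open_preimage_measurable (h : T -> R) :
  (forall a, d_open d (h @^-1` `]a, +oo[)) -> measurable_fun setT h.
Proof.
move=> hO; apply: (measurability (@measurable_realfun.RGenOInfty.G R)).
  exact: measurable_realfun.RGenOInfty.measurableE.
by move=> _ [_ [a ->] <-]; rewrite setTI; apply: d_open_measurable.
Qed.

Lemma lipschitz1_measurable (h : T -> R) : lipschitz1 d h -> measurable_fun setT h.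
Proof.
by move=> hl; apply: d_open_preimage_measurable => a; apply: lipschitz1_open_preimage.
Qed.

End MMSpace.

Section Probability.
Variables (R : realType) (dsp : measure_display) (T : measurableType dsp).
Variable m : probability T R.
Local Open Scope ereal_scope.

Lemma probability_EFin A : measurable A -> exists p : R, m A = p%:E.
Proof.
move=> mA; exists (fine (m A)); rewrite fineK // ge0_fin_numE //.
by rewrite (le_lt_trans (probability_le1 m mA)) ?ltry.
Qed.

Lemma probability_setI_ge A B (a b : R) : measurable A -> measurable B ->
  a%:E <= m A -> b%:E <= m B -> (a + b - 1)%:E <= m (A `&` B).
Proof.
move=> mA mB; have mAB := measurableI _ _ mA mB.
have : m (~` A `|` ~` B) <= m (~` A) + m (~` B).
  by apply: measureU2; apply: measurableC.
rewrite -setCI !(probability_setC m) //.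
have [pA ->] := probability_EFin mA; have [pB ->] := probability_EFin mB.
have [pAB ->] := probability_EFin mAB.
by rewrite -[1]/(1%R%:E) -!EFinB -EFinD !lee_fin; lra.
Qed.

Lemma probability_increasing_gt (E : nat -> set T) (r : R) :
  (forall n, measurable (E n)) -> (forall n, E n `<=` E n.+1) ->
  (forall x, exists n, E n x) -> (r < 1)%R -> exists n, r%:E < m (E n).
Proof.
move=> mE incE covE r1.
have ET : \bigcup_n E n = setT.
  by apply/seteqP; split => // x _; have [n ?] := covE x; exists n.
have ndE : nondecreasing_seq E.
  by apply/nondecreasing_seqP => n; apply/subsetPset.
have ndmE : nondecreasing_seq (m \o E).
  by move=> a b ab; apply: le_measure; rewrite ?inE //; exact/subsetPset/ndE.
have mUE : measurable (\bigcup_n E n) by rewrite ET.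
have mE1 : m (\bigcup_n E n) = ereal_sup (range (m \o E)).
  rewrite -(cvg_lim _ (nondecreasing_cvg_mu mE mUE ndE)) //.
  by rewrite -(cvg_lim _ (ereal_nondecreasing_cvgn ndmE)).
have : r%:E < ereal_sup (range (m \o E)) by rewrite -mE1 ET probability_setT lte_fin.
by case/ereal_sup_gt => _ [n _ <-]; exists n.
Qed.

Variable g : T -> R.
Hypothesis mg : measurable_fun setT g.

Let measurable_sublevel t : measurable (g @^-1` `]-oo, t]).
Proof. exact: measurable_funT_preimage. Qed.

Lemma probability_sublevel_gt (k : R) : (k < 1)%R ->
  exists t, k%:E < m (g @^-1` `]-oo, t]).
Proof.
move=> k1.
have incE n : g @^-1` `]-oo, n%:R] `<=` g @^-1` `]-oo, n.+1%:R].
  by move=> x /=; rewrite !in_itv /= => /le_trans; apply; rewrite ler_nat.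
have covE x : exists n : nat, (g @^-1` `]-oo, n%:R]) x.
  exists (Num.bound `|g x|); rewrite /= in_itv /=.
  by apply/ltW/(le_lt_trans (ler_norm _))/archi_boundP.
have [n kn] := probability_increasing_gt (fun=> measurable_sublevel _) incE covE k1.
by exists n%:R.
Qed.

Lemma probability_sublevel_lt (k : R) : (0 < k)%R ->
  exists t, m (g @^-1` `]-oo, t]) < k%:E.
Proof.
move=> k0; have k1 : (1 - k < 1)%R by lra.
have incE n : ~` (g @^-1` `]-oo, (- n%:R)%R]) `<=` ~` (g @^-1` `]-oo, (- n.+1%:R)%R]).
  move=> x /=; rewrite !in_itv /= => xn; apply: contra_not xn => /le_trans.
  by apply; rewrite lerN2 ler_nat.
have covE x : exists n : nat, (~` (g @^-1` `]-oo, (- n%:R)%R])) x.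
  exists (Num.bound `|g x|); rewrite /= in_itv /=; apply/negP; rewrite -ltNge.
  have := archi_boundP (normr_ge0 (g x)); have := ler_norm (- g x).
  by rewrite normrN; lra.
have [n kn] := probability_increasing_gt
  (fun=> measurableC (measurable_sublevel _)) incE covE k1.
exists (- n%:R)%R; move: kn; rewrite (probability_setC m) //.
have [p ->] := probability_EFin (measurable_sublevel (- n%:R)%R).
by rewrite -[1]/(1%R%:E) -!EFinB !lte_fin; lra.
Qed.

Lemma probability_quantile (k : R) : (0 < k)%R -> (k < 1)%R -> exists M : R,
  forall e : R, (0 < e)%R ->
    k%:E < m (g @^-1` `]-oo, (M + e)%R]) /\ m (g @^-1` `]-oo, (M - e)%R]) <= k%:E.
Proof.
move=> k0 k1; pose S := [set t | k%:E < m (g @^-1` `]-oo, t])].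
have mono t t' : (t <= t')%R -> m (g @^-1` `]-oo, t]) <= m (g @^-1` `]-oo, t']).
  move=> tt'; apply: le_measure; rewrite ?inE //.
  by move=> x /=; rewrite !in_itv /= => /le_trans; apply.
have S0 : S !=set0 by have [t ?] := probability_sublevel_gt k1; exists t.
have S_lb : has_lbound S.
  have [t0 t0k] := probability_sublevel_lt k0; exists t0 => t St.
  rewrite leNgt; apply/negP => tt0.
  by have := lt_trans (lt_le_trans St (mono _ _ (ltW tt0))) t0k; rewrite ltxx.
exists (inf S) => e e0; split.
  have [t St tM] : exists2 t, S t & (t < inf S + e)%R by apply: (inf_lt S0); lra.
  exact: lt_le_trans St (mono _ _ (ltW tM)).
rewrite leNgt; apply/negP => SMe.
by have := ge_inf S_lb SMe; lra.
Qed.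

End Probability.

Section Diameter.
Variable R : realType.
Local Notation distR := (fun x y : R => `|x - y|).
Local Open Scope ereal_scope.

Lemma diam_ge0 (I : set R) : 0 <= diam distR I.
Proof. by apply: ereal_sup_ubound; left. Qed.

Lemma diam_ge (I : set R) p q : I p -> I q -> `|p - q|%:E <= diam distR I.
Proof. by move=> Ip Iq; apply: ereal_sup_ubound; right; exists (p, q). Qed.

Lemma diam_le (I : set R) (L : R) : (0 <= L)%R ->
  (forall p q, I p -> I q -> `|p - q| <= L)%R -> diam distR I <= L%:E.
Proof.
move=> L0 IL; apply: ge_ereal_sup => _ [-> //|[[p q] [/= Ip Iq] <-]].
by rewrite lee_fin; apply: IL.
Qed.

Lemma diam_itv_le (a b : R) : (a <= b)%R -> diam distR `[a, b] <= (b - a)%:E.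
Proof.
move=> ab; apply: diam_le; first by rewrite subr_ge0.
move=> p q; rewrite /= !in_itv /= => /andP[ap pb] /andP[aq qb].
by rewrite ler_norml; apply/andP; split; lra.
Qed.

End Diameter.

Section ObservableDiameter.
Variables (R : realType) (dsp : measure_display) (T : measurableType dsp).
Variables (d : T -> T -> R) (m : probability T R).
Local Notation distR := (fun x y : R => `|x - y|%R).
Local Open Scope ereal_scope.

Lemma partial_diam_le_diam (g : T -> R) (a : R) (I : set R) :
  measurable I -> a%:E <= m (g @^-1` I) ->
  partial_diam distR (pushforward m g) a <= diam distR I.
Proof. by move=> mI gI; apply: ereal_inf_lbound; exists I. Qed.

Lemma partial_diam_le_obs_diam (k : R) (f : T -> R) : lipschitz1 d f ->
  partial_diam distR (pushforward m f) (1 - k) <= obs_diam d m k.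
Proof. by move=> fl; apply: ereal_sup_ubound; exists f. Qed.

Hypothesis mmX : mm_space d.
Let dm : is_metric d. Proof. by case: mmX. Qed.

Lemma obs_diam_ge0 (k : R) : 0 <= obs_diam d m k.
Proof.
have cst0 : lipschitz1 d (fun=> 0%R).
  by move=> x y; rewrite subrr normr0; case: dm.
apply: le_trans (partial_diam_le_obs_diam k cst0).
by apply: le_ereal_inf_tmp => _ [A _ <-]; apply: diam_ge0.
Qed.

Lemma obs_diam_bounded (k : R) : (0 < k)%R ->
  exists n : nat, obs_diam d m k <= (2 * n%:R)%:E.
Proof.
move=> k0; have [x0 _] : [set: T] !=set0.
  apply/set0P/negP => /eqP T0; have := probability_setT m.
  by rewrite T0 measure0 => /eqP; rewrite eq_sym onee_eq0.
have incE n : nbhd d n%:R [set x0] `<=` nbhd d n.+1%:R [set x0].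
  by move=> x [a ax xa]; exists a => //; apply: lt_le_trans xa _; rewrite ler_nat.
have covE x : exists n : nat, nbhd d n%:R [set x0] x.
  by exists (Num.bound (d x x0)), x0 => //; apply: archi_boundP; case: dm.
have [n nk] := probability_increasing_gt m (r := 1 - k)
  (fun=> measurable_nbhd mmX _ _) incE covE ltac:(lra).
exists n; apply: ge_ereal_sup => _ [f fl <-].
pose I := `[(f x0 - n%:R)%R, (f x0 + n%:R)%R]%classic.
have fI : (1 - k)%:E <= m (f @^-1` I).
  apply: le_trans (ltW nk) _; apply: le_measure; rewrite ?inE.
  - exact: measurable_nbhd.
  - exact: measurable_funT_preimage (lipschitz1_measurable mmX fl) (measurable_itv _).
  move=> x [_ -> xx0]; have := fl x x0; rewrite ler_norml => /andP[fx1 fx2].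
  by rewrite /I /= in_itv /=; apply/andP; split; lra.
apply: le_trans (partial_diam_le_diam (measurable_itv _) fI) _.
have n0 : (0 <= n%:R :> R)%R by [].
by apply: le_trans (diam_itv_le _) _; rewrite ?lee_fin; lra.
Qed.

Lemma obs_diam_EFin (k : R) : (0 < k)%R ->
  exists2 D : R, (0 <= D)%R & obs_diam d m k = D%:E.
Proof.
move=> /obs_diam_bounded [n kn]; have k0 := obs_diam_ge0 k.
have kfin : obs_diam d m k \is a fin_num.
  by rewrite ge0_fin_numE // (le_lt_trans kn) ?ltry.
by exists (fine (obs_diam d m k)); rewrite ?fine_ge0 ?fineK.
Qed.

Lemma obs_diam_nbhd (k D delta : R) (A : set T) : (0 <= k)%R ->
  obs_diam d m k <= D%:E -> (0 < delta)%R ->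
  measurable A -> k%:E < m A -> (1 - k)%:E <= m (nbhd d (D + delta) A).
Proof.
move=> k0 kD delta0 mA kA; have A0 : A !=set0.
  by apply/set0P/negP => /eqP A0; move: kA; rewrite A0 measure0 lte_fin; lra.
have fl := dist_set_lipschitz dm A0.
have : partial_diam distR (pushforward m (dist_set d A)) (1 - k) < (D + delta)%:E.
  apply: le_lt_trans (partial_diam_le_obs_diam k fl) _.
  by apply: le_lt_trans kD _; rewrite lte_fin; lra.
case/ereal_inf_lt => _ [I [mI kI] <-] IDdelta.
have mfI := measurable_funT_preimage (lipschitz1_measurable mmX fl) mI.
rewrite /pushforward in kI.
have [a0 Aa0 Ia0] : exists2 a, A a & I (dist_set d A a).
  apply: contrapT => noA; have : m A <= m (~` (dist_set d A @^-1` I)).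
    apply: le_measure; rewrite ?inE //; first exact: measurableC.
    by move=> a Aa Ia; apply: noA; exists a.
  have [p mIp] := probability_EFin m mfI; have [q mAq] := probability_EFin m mA.
  move: kA kI; rewrite (probability_setC m) // mIp mAq -[1]/(1%R%:E) -EFinB.
  by rewrite !lee_fin !lte_fin; lra.
apply: le_trans kI _; apply: le_measure; rewrite ?inE //; first exact: measurable_nbhd.
move=> x Ix; apply: (dist_set_lt A0).
have := le_lt_trans (diam_ge Ix Ia0) IDdelta.
rewrite lte_fin (dist_set_in dm A0 Aa0) subr0.
by have := ler_norm (dist_set d A x); lra.
Qed.

End ObservableDiameter.

Section MetricPreservingTransform.
Variables (R : realType) (F : R -> R).
Hypotheses (mpF : metric_preserving F) (F_cont : {within `[0, +oo[, continuous F}).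
Variables (dsp : measure_display) (T : measurableType dsp).
Variables (d : T -> T -> R) (m : probability T R).
Hypothesis mmX : mm_space d.
Local Notation dF := (fun x y => F (d x y)).
Local Notation distR := (fun x y : R => `|x - y|%R).
Local Open Scope ereal_scope.

Let dm : is_metric d. Proof. by case: mmX. Qed.
Let dFm : is_metric dF. Proof. exact: mpF. Qed.

Lemma nbhd_metric_preserving (s r : R) (A : set T) :
  (2 * F s < r)%R -> nbhd d s A `<=` nbhd dF r A.
Proof.
move=> sr x [a Aa xa]; exists a => //.
have [d0 _] := dm; have xa0 := d0 x a; have xa2s : (d x a <= 2 * s)%R by lra.
by have := metric_preserving_le_double mpF xa0 xa2s; lra.
Qed.

Lemma conc_metric_preserving_le (s r : R) :
  (2 * F s < r)%R -> conc dF m r <= conc d m s.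
Proof.
move=> sr; apply: ge_ereal_sup => _ [A [mA mA12] <-].
apply: (@le_trans _ _ (1 - m (nbhd d s A))); last by apply: ereal_sup_ubound; exists A.
apply: leeB => //; apply: le_measure; rewrite ?inE.
- exact: measurable_nbhd.
- apply/(d_open_measurable mmX)/(d_open_metric_preserving mpF F_cont dm).
  exact: nbhd_open dFm _ _.
- exact: nbhd_metric_preserving.
Qed.

Lemma metric_preserving_lipschitz1_measurable (g : T -> R) :
  lipschitz1 dF g -> measurable_fun setT g.
Proof.
move=> gl; apply: (d_open_preimage_measurable mmX) => a.
exact/(d_open_metric_preserving mpF F_cont dm)/lipschitz1_open_preimage.
Qed.

Lemma partial_diam_metric_preserving_le_eps (k D e : R) (g : T -> R) :
  (0 < k)%R -> (k < 1 / 2)%R -> (0 <= D)%R -> obs_diam d m k <= D%:E ->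
  lipschitz1 dF g -> (0 < e)%R ->
  partial_diam distR (pushforward m g) (1 - 2 * k) <= (4 * F D + 4 * e)%:E.
Proof.
move=> k0 k12 D0 kD gl e0; have mg := metric_preserving_lipschitz1_measurable gl.
have [r r0 Fr] := metric_preserving_le_double_add mpF F_cont D0 e0.
have [M /(_ e e0) [kA kB]] := probability_quantile m mg k0 ltac:(lra).
pose A := g @^-1` `]-oo, (M + e)%R]; pose B := ~` (g @^-1` `]-oo, (M - e)%R]).
have mA : measurable A by apply: measurable_funT_preimage.
have mB' : measurable (g @^-1` `]-oo, (M - e)%R]) by apply: measurable_funT_preimage.
have kB' : k%:E < m B.
  rewrite (probability_setC m) //; have [p mBp] := probability_EFin m mB'.
  by move: kB; rewrite mBp -[1]/(1%R%:E) -EFinB lee_fin lte_fin; lra.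
have := probability_setI_ge (measurable_nbhd mmX (D + r) A)
  (measurable_nbhd mmX (D + r) B) (obs_diam_nbhd mmX (ltW k0) kD r0 mA kA)
  (obs_diam_nbhd mmX (ltW k0) kD r0 (measurableC mB') kB').
rewrite (_ : (1 - k + (1 - k) - 1 = 1 - 2 * k)%R); last by ring.
pose L := (2 * F D + e)%R.
have gI : nbhd d (D + r) A `&` nbhd d (D + r) B `<=`
    g @^-1` `[(M - e - L)%R, (M + e + L)%R].
  have [d0 _] := dm.
  move=> x [[a Aa xa] [b Bb xb]].
  have ga : (g a <= M + e)%R by move: Aa; rewrite /A /= in_itv.
  have gb : (M - e < g b)%R.
    by rewrite ltNge; apply/negP; move: Bb; rewrite /B /= in_itv.
  have Fa := Fr _ (d0 x a) xa; have Fb := Fr _ (d0 x b) xb.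
  have := gl x a; have := gl x b; rewrite !ler_norml => /andP[gb1 gb2] /andP[ga1 ga2].
  by rewrite /L /= in_itv /=; apply/andP; split; lra.
move=> /le_trans/(_ (le_measure _ _ _ gI)); rewrite ?inE.
move=> /(_ (measurableI _ _ (measurable_nbhd mmX _ _) (measurable_nbhd mmX _ _))).
move=> /(_ (measurable_funT_preimage mg (measurable_itv _))) kI.
apply: le_trans (partial_diam_le_diam (measurable_itv _) kI) _.
have FD0 := metric_preserving_ge0 mpF D0.
by apply: le_trans (diam_itv_le _) _; rewrite ?lee_fin /L; lra.
Qed.

Lemma partial_diam_metric_preserving_le (k D : R) (g : T -> R) :
  (0 < k)%R -> (0 <= D)%R -> obs_diam d m k <= D%:E -> lipschitz1 dF g ->
  partial_diam distR (pushforward m g) (1 - 2 * k) <= (4 * F D)%:E.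
Proof.
move=> k0 D0 kD gl; have FD0 := metric_preserving_ge0 mpF D0.
have [k12|k12] := ltP k (1 / 2)%R.
  apply/lee_addgt0Pr => e e0; have e4 : (0 < e / 4)%R by rewrite divr_gt0.
  have := partial_diam_metric_preserving_le_eps k0 k12 D0 kD gl e4.
  by rewrite EFinD (_ : 4 * (e / 4) = e)%R //; field.
have empty : (1 - 2 * k)%:E <= m (g @^-1` set0) by rewrite measure0 lee_fin; lra.
apply: le_trans (partial_diam_le_diam measurable0 empty) _.
apply: le_trans (_ : _ <= 0%:E) _; last by rewrite lee_fin; lra.
by apply: diam_le => // ? ? [].
Qed.

End MetricPreservingTransform.

(* The hypothesis that [F] is nonnegative is implied by metric preservation. *)
Theorem mainTheorem6 (R : realType) (F : R -> R)
    (dsp : measure_display) (T : measurableType dsp)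
    (d : T -> T -> R) (m : probability T R) :
  nonneg_on_nonneg F ->
  metric_preserving F ->
  {within `[0, +oo[, continuous F} ->
  mm_space d ->
  (forall s : R, 0 < s ->
     (ereal_sup [set conc (fun x y => F (d x y)) m (2 * F s + e)%R | e in [set e : R | (0 < e)%R]]
      <= conc d m s)%E) /\
  (forall kappa : R, 0 < kappa ->
     (obs_diam (fun x y => F (d x y)) m (2 * kappa)%R
      <= (4 * F (fine (obs_diam d m kappa)))%:E)%E).
Proof.
move=> _ mpF F_cont mmX; split=> [s _ | k k0].
  apply: ge_ereal_sup => _ [e e0 <-].
  by apply: (conc_metric_preserving_le mpF F_cont m mmX); rewrite ltrDl.
have [D D0 kD] := obs_diam_EFin m mmX k0; rewrite kD /=.
apply: ge_ereal_sup => _ [g gl <-].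
by apply: (partial_diam_metric_preserving_le mpF F_cont mmX k0 D0 _ gl); rewrite kD.
Qed.
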